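(* Let $G$ and $H$ be connected graphs. If $\mu_t(G)=|\mathcal{S}(G)|$ or $\mu_t(H)=|\mathcal{S}(H)|$, then $$\mu_t(G\,\Box\,H)\le \mu_t(G)\,\mu_t(H).$$
   Context: All graphs are finite, simple and undirected. The Cartesian product $G\,\Box\,H$ has vertex set $V(G)\times V(H)$, with $(x,y)$ adjacent to $(x',y')$ iff either $x=x'$ and $yy'\in E(H)$, or $xx'\in E(G)$ and $y=y'$. Let $F$ be a connected graph and $X\subseteq V(F)$. Two vertices $x,y\in V(F)$ are $X$-visible if there exists a shortest $x,y$-path in $F$ none of whose internal vertices belongs to $X$. $X$ is a total mutual-visibility set of $F$ if every two vertices of $F$ are $X$-visible (the empty set is allowed). $\mu_t(F)$ is the maximum cardinality of a total mutual-visibility set of $F$. A vertex is simplicial if its neighbors induce a complete graph; $\mathcal{S}(F)$ is the set of simplicial vertices of $F$. *)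

(* Finite simple graphs as symmetric irreflexive relations on a finType. *)
From mathcomp Require Import all_boot.
From mathcomp Require Import boolp.
Set Implicit Arguments. Unset Strict Implicit. Unset Printing Implicit Defensive.

Section Graphs.
Variable T : finType.
Variable e : rel T.

Definition simple_graph : Prop := symmetric e /\ irreflexive e.

Definition connected_graph : Prop :=
  0 < #|T| /\ forall x y : T, connect e x y.

(* A walk from x to y is encoded as x :: p with path e x p and last x p = y;
   its length is size p. *)
Definition xy_walk (x y : T) (p : seq T) : bool := path e x p && (last x p == y).

Definition shortest_path (x y : T) (p : seq T) : Prop :=
  xy_walk x y p /\ forall q, xy_walk x y q -> size p <= size q.

(* internal vertices of the walk x :: p (all vertices except the two ends) *)
Definition internal (x : T) (p : seq T) : seq T := behead (belast x p).

Definition X_visible (X : {set T}) (x y : T) : Prop :=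
  exists p, shortest_path x y p /\ all (fun v => v \notin X) (internal x p).

Definition total_mutual_visibility (X : {set T}) : Prop :=
  forall x y : T, X_visible X x y.

Definition tmvb (X : {set T}) : bool := `[< total_mutual_visibility X >].

Definition mu_t : nat := \max_(X : {set T} | tmvb X) #|X|.

Definition simplicial (v : T) : bool :=
  [forall a, forall b, (e v a && e v b && (a != b)) ==> e a b].

Definition simplicial_set : {set T} := [set v | simplicial v].
End Graphs.

Definition cart_prod (T U : finType) (e : rel T) (f : rel U) : rel (T * U) :=
  fun a b => ((a.1 == b.1) && f a.2 b.2) || (e a.1 b.1 && (a.2 == b.2)).

From mathcomp Require Import all_boot.
From mathcomp Require Import boolp.
Set Implicit Arguments. Unset Strict Implicit. Unset Printing Implicit Defensive.

(* 1. A simplicial vertex is never internal to a shortest path, so adding the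
      simplicial vertices to a total mutual-visibility set keeps it one.  Hence
      if mu_t(G) = |S(G)|, every total mutual-visibility set of G lies in S(G).
   2. If X is a total mutual-visibility set of G [] H, each fiber of X (its
      trace on a G-layer or an H-layer) is one of the factor.  This is proved
      once for an abstract "retraction" of a graph onto a layer: projecting a
      shortest path between two layer vertices and deleting repetitions gives a
      walk in the factor, which must have the same length, so the path stayed
      in the layer.
   3. Counting: the G-fibers all lie in S(G), so only the rows over S(G) are
      nonempty, each of size at most mu_t(H); hence |X| <= |S(G)| mu_t(H).
      The case of H is reduced to this one by exchanging the two factors. *)

Lemma internal_split (T : eqType) (v x : T) (p : seq T) :
  v \in behead (belast x p) -> exists p1 b p2, p = p1 ++ v :: b :: p2.
Proof.
elim: p x => [|c p IH] x //=.
case: p IH => [|d p'] IH //=.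
rewrite inE => /orP [/eqP ->|v_in]; first by exists [::], d, p'.
have [p1 [b [p2 ->]]] := IH c v_in.
by exists (c :: p1), b, p2.
Qed.

Section Simplicial.
Variables (T : finType) (e : rel T).
Hypothesis e_sym : symmetric e.

(* A shortest path has no simplicial internal vertex: its two neighbours on
   the path are equal or adjacent, so the path could be shortened. *)
Lemma simplicial_not_internal x y p v :
  shortest_path e x y p -> v \in internal x p -> ~~ simplicial e v.
Proof.
move=> [walk_p min_p] /internal_split [p1 [b [p2 def_p]]].
apply/negP => simp_v.
move: walk_p; rewrite /xy_walk def_p cat_path last_cat /=.
move=> /andP [/and4P [path_p1 e_av e_vb path_p2] last_p].
set a := last x p1 in e_av last_p path_p2 *.
have [a_eq_b|a_neq_b] := eqVneq a b.
- have := min_p (p1 ++ p2).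
  rewrite /xy_walk cat_path last_cat path_p1 -/a a_eq_b path_p2 last_p def_p.
  by rewrite !size_cat /= => /(_ isT); rewrite leq_add2l ltnNge leqnSn.
- have e_ab : e a b.
    move: simp_v => /forallP /(_ a) /forallP /(_ b).
    by rewrite e_sym e_av e_vb a_neq_b.
  have := min_p (p1 ++ b :: p2).
  rewrite /xy_walk cat_path last_cat path_p1 -/a /= e_ab path_p2 last_p def_p.
  by rewrite !size_cat /= => /(_ isT); rewrite leq_add2l ltnn.
Qed.

Lemma tmv_setU_simplicial X :
  total_mutual_visibility e X -> total_mutual_visibility e (X :|: simplicial_set e).
Proof.
move=> tmvX x y; have [p [shortest_p avoid_p]] := tmvX x y.
exists p; split=> //; apply/allP => v v_int.
rewrite in_setU in_set negb_or (allP avoid_p v v_int) /=.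
exact: simplicial_not_internal shortest_p v_int.
Qed.

Lemma tmv_card_le X : total_mutual_visibility e X -> #|X| <= mu_t e.
Proof. by move=> tmvX; apply: (@leq_bigmax_cond _ (tmvb e)); apply/asboolP. Qed.

Lemma tmv_sub_simplicial X : mu_t e = #|simplicial_set e| ->
  total_mutual_visibility e X -> X \subset simplicial_set e.
Proof.
move=> mu_simp tmvX.
have le_mu := tmv_card_le (tmv_setU_simplicial tmvX).
have : simplicial_set e == X :|: simplicial_set e.
  by rewrite eqEcard subsetUr -mu_simp le_mu.
by move/eqP => ->; rewrite subsetUl.
Qed.
End Simplicial.

(* A layer of a graph E on V modelled on a graph e on T: the embedding sigma
   and the projection pi satisfy pi (sigma x) = x, sigma preserves edges, pi
   maps edges to edges or loops, and an edge leaving a layer vertex is either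
   inside the layer or projects to a loop. *)
Section Layer.
Variables (V T : finType) (E : rel V) (e : rel T) (pi : V -> T) (sigma : T -> V).
Hypothesis pi_sigma : cancel sigma pi.
Hypothesis sigma_edge : {homo sigma : x y / e x y >-> E x y}.
Hypothesis pi_edge : forall a b, E a b -> pi a != pi b -> e (pi a) (pi b).
Hypothesis layer_edge : forall a b,
  E a b -> pi a != pi b -> a = sigma (pi a) -> b = sigma (pi b).

Fixpoint compress (a : V) (p : seq V) : seq T :=
  if p is b :: p' then
    if pi a == pi b then compress b p' else pi b :: compress b p'
  else [::].

Lemma compress_walk a p : path E a p ->
  path e (pi a) (compress a p) /\ last (pi a) (compress a p) = pi (last a p).
Proof.
elim: p a => [|b p IH] a //= /andP [E_ab path_p].
have [path_q last_q] := IH b path_p.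
case: (eqVneq (pi a) (pi b)) => [->|pi_neq] //=.
by rewrite pi_edge.
Qed.

Lemma size_compress a p : size (compress a p) <= size p.
Proof.
by elim: p a => [|b p IH] a //=; case: eqP => _ /=; [apply: leqW|]; apply: IH.
Qed.

Lemma compress_full a p : path E a p -> a = sigma (pi a) ->
  size (compress a p) = size p -> p = map sigma (compress a p).
Proof.
elim: p a => [|b p IH] a; first by move=> *.
move=> /= /andP [E_ab path_p] a_layer.
case: (eqVneq (pi a) (pi b)) => [_|pi_neq] /=.
  by move=> size_eq; have := size_compress b p; rewrite size_eq ltnn.
move=> [size_eq]; have b_layer := layer_edge E_ab pi_neq a_layer.
by rewrite {1}b_layer -IH.
Qed.

Lemma layer_tmv X : total_mutual_visibility E X ->
  total_mutual_visibility e [set x | sigma x \in X].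
Proof.
move=> tmvX x y; have [p [[walk_p min_p] avoid_p]] := tmvX (sigma x) (sigma y).
move: walk_p => /andP [path_p /eqP last_p].
have [path_q last_q] := compress_walk path_p.
set q := compress (sigma x) p in path_q last_q.
rewrite pi_sigma in path_q last_q.
have walk_q : xy_walk e x y q by rewrite /xy_walk path_q last_q last_p pi_sigma eqxx.
have lift_min r : xy_walk e x y r -> size p <= size r.
  move=> /andP [path_r /eqP last_r]; rewrite -(size_map sigma); apply: min_p.
  by rewrite /xy_walk (homo_path sigma_edge path_r) last_map last_r eqxx.
have size_q : size q = size p.
  by apply/eqP; rewrite eqn_leq size_compress lift_min.
have def_p : p = map sigma q by apply: compress_full; rewrite ?pi_sigma.
exists q; split; first by split=> // r /lift_min; rewrite size_q.
move: avoid_p; rewrite def_p /internal belast_map behead_map all_map.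
by apply: sub_all => v; rewrite in_set.
Qed.
End Layer.

Section Product.
Variables (T U : finType) (e : rel T) (f : rel U).

Definition row_fiber (X : {set T * U}) (g : T) : {set U} := [set h | (g, h) \in X].
Definition col_fiber (X : {set T * U}) (h : U) : {set T} := [set g | (g, h) \in X].

Lemma col_fiber_tmv X h : total_mutual_visibility (cart_prod e f) X ->
  total_mutual_visibility e (col_fiber X h).
Proof.
apply: (@layer_tmv _ _ _ _ fst (fun g => (g, h))) => //.
- by move=> x y e_xy; rewrite /cart_prod /= e_xy eqxx orbT.
- by move=> [a1 a2] [b1 b2]; rewrite /cart_prod /= => /orP [/andP [/eqP ->]|/andP []];
    rewrite ?eqxx.
- move=> [a1 a2] [b1 b2]; rewrite /cart_prod /= => /orP [/andP [/eqP -> _]|/andP [_ /eqP ->]];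
    by rewrite ?eqxx // => _ [->].
Qed.

Lemma row_fiber_tmv X g : total_mutual_visibility (cart_prod e f) X ->
  total_mutual_visibility f (row_fiber X g).
Proof.
apply: (@layer_tmv _ _ _ _ snd (fun h => (g, h))) => //.
- by move=> x y f_xy; rewrite /cart_prod /= f_xy eqxx.
- by move=> [a1 a2] [b1 b2]; rewrite /cart_prod /= => /orP [/andP []|/andP [_ /eqP ->]];
    rewrite ?eqxx.
- move=> [a1 a2] [b1 b2]; rewrite /cart_prod /= => /orP [/andP [/eqP -> _]|/andP [_ /eqP ->]];
    by rewrite ?eqxx // => _ [->].
Qed.

Lemma card_rows (X : {set T * U}) : #|X| = \sum_g #|row_fiber X g|.
Proof.
transitivity (\sum_g \sum_h (if (g, h) \in X then 1 else 0)).
  by rewrite pair_bigA -sum1_card big_mkcond /=; apply: eq_bigr => -[g h].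
apply: eq_bigr => g _; rewrite -sum1_card [RHS]big_mkcond /=.
by apply: eq_bigr => h _; rewrite in_set.
Qed.

Lemma card_le_fibers (X : {set T * U}) (S : {set T}) m :
  (forall h, col_fiber X h \subset S) -> (forall g, #|row_fiber X g| <= m) ->
  #|X| <= #|S| * m.
Proof.
move=> col_sub row_le; rewrite card_rows (bigID (mem S)) /=.
rewrite [X in _ + X]big1 ?addn0; last first.
  move=> g g_notS; apply/eqP; rewrite cards_eq0; apply/eqP/setP => h.
  rewrite !inE; apply/negP => gh_in; move/negP: g_notS; apply.
  by apply: (subsetP (col_sub h)); rewrite inE.
by rewrite -sum_nat_const leq_sum.
Qed.
End Product.

Section Swap.
Variables (T U : finType) (X : {set T * U}).

Definition swap_set : {set U * T} := [set (x.2, x.1) | x in X].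

Lemma swap_inj : injective (fun x : T * U => (x.2, x.1)).
Proof. by move=> [a1 a2] [b1 b2] [-> ->]. Qed.

Lemma card_swap_set : #|swap_set| = #|X|.
Proof. exact: card_imset swap_inj. Qed.

Lemma mem_swap_set g h : ((h, g) \in swap_set) = ((g, h) \in X).
Proof. exact: (mem_imset _ (g, h) swap_inj). Qed.

Lemma row_fiber_swap h : row_fiber swap_set h = col_fiber X h.
Proof. by apply/setP => g; rewrite !inE mem_swap_set. Qed.

Lemma col_fiber_swap g : col_fiber swap_set g = row_fiber X g.
Proof. by apply/setP => h; rewrite !inE mem_swap_set. Qed.
End Swap.

Unset Implicit Arguments.
Theorem theorem5p4 (T U : finType) (e : rel T) (f : rel U) :
  simple_graph e -> connected_graph e ->
  simple_graph f -> connected_graph f ->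
  (mu_t e = #|simplicial_set e| \/ mu_t f = #|simplicial_set f|) ->
  mu_t (cart_prod e f) <= mu_t e * mu_t f.
Proof.
move=> [e_sym _] _ [f_sym _] _ mu_simp.
apply/bigmax_leqP => X /asboolP tmvX.
case: mu_simp => [mu_e|mu_f].
- rewrite mu_e; apply: card_le_fibers => [h|g].
  + exact: (tmv_sub_simplicial e_sym mu_e (col_fiber_tmv h tmvX)).
  + exact: tmv_card_le (row_fiber_tmv g tmvX).
- rewrite -card_swap_set mulnC mu_f; apply: card_le_fibers => [g|h].
  + rewrite col_fiber_swap.
    exact: (tmv_sub_simplicial f_sym mu_f (row_fiber_tmv g tmvX)).
  + by rewrite row_fiber_swap; exact: tmv_card_le (col_fiber_tmv h tmvX).
Qed.
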